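(* Let $$\Delta t_{\mathrm{CFL}}=\frac{2}{\frac{2\hbar}{m}\left(\frac{1}{(\Delta x)^2}+\frac{1}{(\Delta y)^2}+\frac{1}{(\Delta z)^2}\right)+\frac{\max_{i,j,k}|U_{i,j,k}|}{\hbar}}$$ and $$\Delta t_{\mathrm{CFL,gen}}=\frac{2}{\rho\!\left(\frac{1}{\hbar}(D_V'')^{-1/2}H(D_V'')^{-1/2}\right)},$$ where $\rho(\cdot)$ is the spectral radius. Then $\Delta t_{\mathrm{CFL}}\le\Delta t_{\mathrm{CFL,gen}}$.
   Context: Fix constants $\hbar>0$, $m>0$, cell sizes $\Delta x,\Delta y,\Delta z>0$ and positive integers $n_x,n_y,n_z$. The region is a box of $n_x\times n_y\times n_z$ primary cells of size $\Delta x\times\Delta y\times\Delta z$ with primary nodes $(i,j,k)$, $1\le i\le n_x+1$, $1\le j\le n_y+1$, $1\le k\le n_z+1$. Let $N=(n_x+1)(n_y+1)(n_z+1)$; node-indexed vectors use the ordering $i+(j-1)(n_x+1)+(k-1)(n_x+1)(n_y+1)$. Real potential values $U_{i,j,k}$ are given at the nodes; $D_U$ is the $N\times N$ diagonal matrix containing them. Let $I_p$ be the $p\times p$ identity, $\tilde I_p=\mathrm{diag}(\tfrac12,1,\dots,1,\tfrac12)$ ($p\times p$), $W_p=[0_{p\times1}\ I_p]-[I_p\ 0_{p\times 1}]$ ($p\times(p+1)$), $\otimes$ the Kronecker product. Define $D_V''=\Delta x\Delta y\Delta z\,\tilde I_{n_z+1}\otimes\tilde I_{n_y+1}\otimes\tilde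 I_{n_x+1}$; $D=[D_x\ D_y\ D_z]$ with $D_x=-I_{n_z+1}\otimes I_{n_y+1}\otimes W_{n_x}^T$, $D_y=-I_{n_z+1}\otimes W_{n_y}^T\otimes I_{n_x+1}$, $D_z=-W_{n_z}^T\otimes I_{n_y+1}\otimes I_{n_x+1}$; $D_S''=\mathrm{diag}(\Delta y\Delta z\,\tilde I_{n_z+1}\otimes\tilde I_{n_y+1}\otimes I_{n_x},\ \Delta x\Delta z\,\tilde I_{n_z+1}\otimes I_{n_y}\otimes\tilde I_{n_x+1},\ \Delta x\Delta y\,I_{n_z}\otimes\tilde I_{n_y+1}\otimes\tilde I_{n_x+1})$; $D_l'=\mathrm{diag}(\Delta x\, I_{n_x(n_y+1)(n_z+1)},\ \Delta y\, I_{(n_x+1)n_y(n_z+1)},\ \Delta z\, I_{(n_x+1)(n_y+1)n_z})$; $H=\frac{\hbar^2}{2m}D D_S''(D_l')^{-1}D^T+D_V''D_U$. *)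

From HB Require Import structures.
From mathcomp Require Import all_boot all_order all_algebra.
From mathcomp.real_closed Require Import complex mxtens.
Set Implicit Arguments. Unset Strict Implicit. Unset Printing Implicit Defensive.
Import Order.TTheory GRing.Theory Num.Theory.
Local Open Scope ring_scope.

Section Defs.
Variable R : rcfType.

(* spectral radius: max modulus of the (complex) eigenvalues, i.e. of the roots
   (with multiplicity) of the characteristic polynomial of A seen over R[i]. *)
Definition spectral_radius n (A : 'M[R]_n) : R :=
  \big[Num.max/0]_(z <- sval (closed_field_poly_normal
                        (char_poly (map_mx (real_complex R) A))))
     Normc.normc z.

Definition tI (p : nat) : 'M[R]_p :=
  diag_mx (\row_(i < p) if ((i == 0%N :> nat) || (i == p.-1 :> nat))
                        then (2%:R)^-1 else 1).

Definition W (p : nat) : 'M[R]_(p, p.+1) :=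
  row_mx (0 : 'M[R]_(p, 1)) (1%:M : 'M[R]_p)
  - castmx (erefl p, addn1 p) (row_mx (1%:M : 'M[R]_p) (0 : 'M[R]_(p, 1))).

Variables (hbar m dx dy dz : R) (nx ny nz : nat).
Variable U : 'I_nx.+1 -> 'I_ny.+1 -> 'I_nz.+1 -> R.
(* U i j k is U_{i+1,j+1,k+1} in the paper's 1-based indexing *)

Local Notation N := (nz.+1 * (ny.+1 * nx.+1))%N.

Definition DV : 'M[R]_N := (dx * dy * dz) *: (tI nz.+1 *t (tI ny.+1 *t tI nx.+1)).

(* node l (0-based) = i + j (nx+1) + k (nx+1)(ny+1) *)
Definition DU : 'M[R]_N :=
  diag_mx (\row_(l < N) U (inord (l %% nx.+1)) (inord ((l %/ nx.+1) %% ny.+1))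
                          (inord (l %/ (ny.+1 * nx.+1)))).

Definition Dx : 'M[R]_(N, nz.+1 * (ny.+1 * nx)) :=
  - ((1%:M : 'M[R]_nz.+1) *t ((1%:M : 'M[R]_ny.+1) *t (W nx)^T)).
Definition Dy : 'M[R]_(N, nz.+1 * (ny * nx.+1)) :=
  - ((1%:M : 'M[R]_nz.+1) *t ((W ny)^T *t (1%:M : 'M[R]_nx.+1))).
Definition Dz : 'M[R]_(N, nz * (ny.+1 * nx.+1)) :=
  - ((W nz)^T *t ((1%:M : 'M[R]_ny.+1) *t (1%:M : 'M[R]_nx.+1))).

Definition D := row_mx Dx (row_mx Dy Dz).

Definition DS :=
  block_mx ((dy * dz) *: (tI nz.+1 *t (tI ny.+1 *t (1%:M : 'M[R]_nx)))) 0 0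
   (block_mx ((dx * dz) *: (tI nz.+1 *t ((1%:M : 'M[R]_ny) *t tI nx.+1))) 0 0
             ((dx * dy) *: ((1%:M : 'M[R]_nz) *t (tI ny.+1 *t tI nx.+1)))).

Definition Dl :=
  block_mx (dx *: (1%:M : 'M[R]_(nz.+1 * (ny.+1 * nx)))) 0 0
   (block_mx (dy *: (1%:M : 'M[R]_(nz.+1 * (ny * nx.+1)))) 0 0
             (dz *: (1%:M : 'M[R]_(nz * (ny.+1 * nx.+1))))).

Definition H : 'M[R]_N :=
  (hbar ^+ 2 / (2%:R * m)) *: (D *m DS *m invmx Dl *m D^T) + DV *m DU.

Definition DVmhalf : 'M[R]_N :=
  \matrix_(a, b) if a == b then (Num.sqrt (DV a a))^-1 else 0.

Definition dt_CFL_gen : R :=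
  2%:R / spectral_radius (hbar^-1 *: (DVmhalf *m H *m DVmhalf)).

Definition maxU : R :=
  \big[Num.max/0]_(i < nx.+1) \big[Num.max/0]_(j < ny.+1)
     \big[Num.max/0]_(k < nz.+1) `|U i j k|.

Definition dt_CFL : R :=
  2%:R / ((2%:R * hbar / m) * (dx ^+ 2)^-1 + (2%:R * hbar / m) * (dy ^+ 2)^-1
          + (2%:R * hbar / m) * (dz ^+ 2)^-1 + maxU / hbar).
End Defs.

(* The matrix [hbar^-1 DV^-1/2 H DV^-1/2] whose spectral radius defines [dt_CFL_gen] is
   similar, through [DV^-1/2], to [hbar^-1 H DV^-1], and the modulus of every eigenvalue is
   at most the largest column sum of absolute values.  Column [j] of [H] is controlled node
   by node: each 1-D stencil [W^T W] has column sums at most 4 times the trapezoidal weight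
   of [tI], so the kinetic part contributes [(2 hbar^2 / m) DV_jj / d^2] per direction and the
   potential part [DV_jj max |U|]; hence the spectral radius is at most [2 / dt_CFL].  It is
   also positive, because the matrix is symmetric and nonzero: a zero spectrum makes it
   nilpotent by Cayley-Hamilton, and a real symmetric nilpotent matrix vanishes. *)

From Pilot Require Import Defs.
From HB Require Import structures.
From mathcomp Require Import all_boot all_order all_algebra.
From mathcomp.real_closed Require Import complex mxtens.
From mathcomp Require Import zify ring lra.
Set Implicit Arguments. Unset Strict Implicit. Unset Printing Implicit Defensive.
Import Order.TTheory GRing.Theory Num.Theory.
Local Open Scope ring_scope.

Section ColumnSums.
Variable R : numDomainType.

Definition colsum m n (M : 'M[R]_(m, n)) (j : 'I_n) : R := \sum_i `|M i j|.

Lemma colsumD m n (A B : 'M[R]_(m, n)) (j : 'I_n) :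
  colsum (A + B) j <= colsum A j + colsum B j.
Proof. by rewrite -big_split; apply: ler_sum => i _; rewrite mxE ler_normD. Qed.

Lemma colsumZ m n a (A : 'M[R]_(m, n)) (j : 'I_n) :
  colsum (a *: A) j = `|a| * colsum A j.
Proof. by rewrite mulr_sumr; apply: eq_bigr => i _; rewrite mxE normrM. Qed.

Lemma colsum_mul_diag m n (A : 'M[R]_(m, n)) d (j : 'I_n) :
  colsum (A *m diag_mx d) j = colsum A j * `|d 0 j|.
Proof. by rewrite mulr_suml; apply: eq_bigr => i _; rewrite mul_mx_diag mxE normrM. Qed.

Lemma colsum_diag n (d : 'rV[R]_n) j : colsum (diag_mx d) j = `|d 0 j|.
Proof.
rewrite /colsum (bigD1 j) //= big1 => [|i /negPf ij]; last by rewrite mxE ij normr0.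
by rewrite mxE eqxx addr0.
Qed.

Lemma colsum_tens m n p q (A : 'M[R]_(m, n)) (B : 'M[R]_(p, q)) (j : 'I_(n * q)) :
  colsum (A *t B) j = colsum A (mxtens_unindex j).1 * colsum B (mxtens_unindex j).2.
Proof. by rewrite /colsum mulr_sum; apply: eq_bigr => i _; rewrite mxE normrM. Qed.

Lemma colsum_trmx_mul m n q (A : 'M[R]_(m, n)) (B : 'M[R]_(m, q)) c j :
  (forall k, \sum_r `|A k r| <= c) -> colsum (A^T *m B) j <= c * colsum B j.
Proof.
move=> rowA; rewrite mulr_sumr.
apply: (@le_trans _ _ (\sum_r \sum_k `|A k r| * `|B k j|)).
  apply: ler_sum => r _; rewrite mxE; apply: le_trans (ler_norm_sum _ _ _) _.
  by apply: ler_sum => k _; rewrite mxE normrM.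
rewrite exchange_big; apply: ler_sum => k _.
by rewrite -mulr_suml ler_wpM2r.
Qed.

End ColumnSums.

Lemma trmxX (R : comPzRingType) n (A : 'M[R]_n) k : (A ^+ k)^T = A^T ^+ k.
Proof.
elim: k => [|k IH]; first by rewrite !expr0 trmx1.
by rewrite exprS -mulmxE trmx_mul IH mulmxE -exprSr.
Qed.

Lemma tens_diag_mx (R : pzRingType) m n (d : 'rV[R]_m) (e : 'rV[R]_n) :
  diag_mx d *t diag_mx e
  = diag_mx (\row_k (d 0 (mxtens_unindex k).1 * e 0 (mxtens_unindex k).2)).
Proof.
apply/matrixP => k l; rewrite !mxE -(inj_eq (can_inj (@mxtens_unindexK m n))).
case: (mxtens_unindex k) (mxtens_unindex l) => [a b] [c e'] /=.
by rewrite xpair_eqE mulrnAl mulrnAr -mulrnA mulnC mulnb.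
Qed.

Lemma sum_ord_eq_nat (R : pzSemiRingType) n a :
  \sum_(r < n) (((r : nat) == a)%:R : R) = (a < n)%:R.
Proof.
rewrite (eq_bigr (fun r : 'I_n => if (r : nat) == a then 1 else 0)) => [|r _].
  by rewrite -big_mkcond (big_ord1_eq _ (fun=> 1)); case: ltnP.
by case: eqP.
Qed.

Section RealSymmetric.
Variable R : realDomainType.

Lemma trmx_mul_self_eq0 m n (A : 'M[R]_(m, n)) : A^T *m A = 0 -> A = 0.
Proof.
move=> AtA0; apply/matrixP => i j; rewrite mxE; apply/eqP.
have /eqP : (A^T *m A) j j = 0 by rewrite AtA0 mxE.
rewrite mxE psumr_eq0 => [/allP/(_ i (mem_index_enum _))|k _]; rewrite mxE -expr2.
  by rewrite sqrf_eq0.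
exact: sqr_ge0.
Qed.

Lemma sym_nilpotent_eq0 n (A : 'M[R]_n) k : A^T = A -> A ^+ k.+1 = 0 -> A = 0.
Proof.
move=> symA; elim: k => [|k IH] Ak; first by rewrite expr1 in Ak.
apply: IH; apply: trmx_mul_self_eq0.
by rewrite trmxX symA mulmxE -exprD addSnnS exprD Ak mulr0.
Qed.

End RealSymmetric.

Section SpectralRadius.
Variable R : rcfType.
Local Notation normc := (@Normc.normc R).
Local Notation toC := (map_mx (real_complex R)).

Lemma normc_ge0 (z : R[i]) : 0 <= normc z.
Proof. by case: z => a b; rewrite sqrtr_ge0. Qed.

Lemma normc_real (r : R) : normc (r%:C)%C = `|r|.
Proof. by rewrite /Normc.normc /= expr0n addr0 sqrtr_sqr. Qed.

Definition spectrum n (A : 'M[R]_n) : seq R[i] :=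
  sval (closed_field_poly_normal (char_poly (toC A))).

Lemma char_poly_spectrum n (A : 'M[R]_n) :
  char_poly (toC A) = \prod_(z <- spectrum A) ('X - z%:P).
Proof.
rewrite /spectrum; case: closed_field_poly_normal => r /= {1}->.
by rewrite (monicP (char_poly_monic _)) scale1r.
Qed.

Lemma spectrum_eigenvalue n (A : 'M[R]_n) z :
  z \in spectrum A -> eigenvalue (toC A) z.
Proof. by rewrite eigenvalue_root_char char_poly_spectrum root_prod_XsubC. Qed.

(* Read the eigen-equation at a coordinate of [w] of maximal modulus. *)
Lemma normc_le_colsum n (B : 'M[R]_n) (z : R[i]) (w : 'rV[R[i]]_n) b :
  w != 0 -> w *m toC B = z *: w -> (forall j, colsum B j <= b) -> normc z <= b.
Proof.
move=> w_neq0 wB le_b.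
have [j0 wj0_neq0] : exists j0, w 0 j0 != 0.
  apply/existsP; apply: contraR w_neq0 => /existsPn wj0.
  by apply/eqP/rowP => j; rewrite mxE; apply/eqP/negPn.
pose F j := normc (w 0 j).
have [j _ F_max] := @arg_maxP _ _ _ j0 xpredT F isT.
have Fj_gt0 : 0 < F j.
  apply: lt_le_trans (F_max j0 isT); rewrite lt_def normc_ge0 andbT.
  by apply: contra wj0_neq0 => /eqP/Normc.eq0_normc ->.
have zwj : z * w 0 j = \sum_i w 0 i * (B i j)%:C%C.
  have := congr1 (fun v : 'rV[R[i]]_n => v 0 j) wB; rewrite !mxE => <-.
  by apply: eq_bigr => i; rewrite mxE.
rewrite -(ler_pM2r Fj_gt0) -Normc.normcM zwj mulrC.
apply: le_trans (@ler_norm_sum _ (Rcomplex R) _ _ _ _) _.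
rewrite /colsum in le_b.
apply: le_trans (ler_wpM2l (ltW Fj_gt0) (le_b j)); rewrite mulr_sumr.
apply: ler_sum => i _; rewrite [`|_|]Normc.normcM normc_real.
by rewrite ler_wpM2r //; apply: F_max.
Qed.

Lemma spectral_radius_le_colsum n (A B S : 'M[R]_n) b :
  S \in unitmx -> A *m S = S *m B -> (forall j, colsum B j <= b) -> 0 <= b ->
  spectral_radius A <= b.
Proof.
move=> S_unit AS_SB le_b b_ge0; rewrite /spectral_radius -/(spectrum A).
rewrite big_seq; apply: bigmax_le => // z /spectrum_eigenvalue /eigenvalueP[v vA v_neq0].
apply: (@normc_le_colsum _ B z (v *m toC S)) => //.
  have SC_unit : toC S \in unitmx by rewrite map_unitmx.
  by apply: contra v_neq0 => /eqP vS0; rewrite -[v](mulmxK SC_unit) vS0 mul0mx.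
by rewrite -mulmxA -map_mxM -AS_SB map_mxM mulmxA vA scalemxAl.
Qed.

Lemma spectral_radius_le0_nilpotent n (A : 'M[R]_n.+1) :
  spectral_radius A <= 0 -> A ^+ n.+1 = 0.
Proof.
rewrite /spectral_radius -/(spectrum A) => rho_le0.
have spec0 z : z \in spectrum A -> z = 0.
  move=> zA; apply/Normc.eq0_normc/eqP; rewrite eq_le normc_ge0 andbT.
  by apply: le_trans rho_le0; apply: le_bigmax_seq.
have charA : char_poly A = 'X^(size (spectrum A)).
  apply: (@map_poly_inj _ _ (real_complex R)).
  rewrite map_char_poly char_poly_spectrum map_polyXn big_seq.
  rewrite (eq_bigr (fun=> 'X)) => [|z /spec0 ->]; last by rewrite subr0.
  by rewrite -big_seq big_const_seq count_predT iter_mulr_1.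
have [size_spec] : (size (spectrum A)).+1 = n.+2.
  by rewrite -(size_polyXn R) -charA size_char_poly.
by have := Cayley_Hamilton A; rewrite charA size_spec rmorphXn /= horner_mx_X.
Qed.

Lemma spectral_radius_gt0 n (A : 'M[R]_n) :
  A^T = A -> A != 0 -> 0 < spectral_radius A.
Proof.
move=> symA; apply: contraR; rewrite -leNgt.
case: n A symA => [|n] A symA rho_le0; first by apply/eqP/matrixP => [[]].
exact/eqP/(sym_nilpotent_eq0 symA)/spectral_radius_le0_nilpotent.
Qed.

End SpectralRadius.

Section Stencil1D.
Variable R : rcfType.

Definition tIw p (a : 'I_p) : R :=
  if (a == 0%N :> nat) || (a == p.-1 :> nat) then 2%:R^-1 else 1.

Lemma tIE p : tI R p = diag_mx (\row_a tIw a).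
Proof. by []. Qed.

Lemma tI_entry p (a b : 'I_p) : tI R p a b = tIw a *+ (a == b).
Proof. by rewrite tIE mxE mxE. Qed.

Lemma tIw_gt0 p (a : 'I_p) : 0 < tIw a.
Proof. by rewrite /tIw; case: ifP; rewrite ?invr_gt0 ?ltr0n. Qed.

Lemma colsum_tI p (a : 'I_p) : colsum (tI R p) a = tIw a.
Proof. by rewrite tIE colsum_diag mxE ger0_norm // ltW // tIw_gt0. Qed.

Lemma WE p (k : 'I_p) (j : 'I_p.+1) :
  W R p k j = ((j : nat) == k.+1)%:R - ((j : nat) == k)%:R.
Proof.
have shifted : row_mx (0 : 'M[R]_(p, 1)) 1%:M k j = ((j : nat) == k.+1)%:R.
  case: (@splitP 1 p j) => j1 jE.
    have -> : j = lshift p j1 by apply: val_inj.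
    by rewrite row_mxEl mxE [j1]ord1.
  have -> : j = rshift 1 j1 by apply: val_inj.
  by rewrite row_mxEr mxE /= add1n eqSS eq_sym.
have diagonal : castmx (erefl p, addn1 p) (row_mx (1%:M : 'M[R]_p) 0) k j
                = ((j : nat) == k)%:R.
  rewrite castmxE /=; case: (splitP (cast_ord (esym (addn1 p)) j)) => j1 /= jE.
    have -> : cast_ord (esym (addn1 p)) j = lshift 1 j1 by apply: val_inj.
    by rewrite row_mxEl mxE -val_eqE /= jE eq_sym.
  have -> : cast_ord (esym (addn1 p)) j = rshift p j1 by apply: val_inj.
  by rewrite row_mxEr mxE jE ord1 addn0 gtn_eqF.
by rewrite /W mxE shifted mxE diagonal.
Qed.


Lemma normW_le p (k : 'I_p) (j : 'I_p.+1) :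
  `|W R p k j| <= ((j : nat) == k.+1)%:R + ((j : nat) == k)%:R.
Proof. by rewrite WE; apply: le_trans (ler_normB _ _) _; rewrite !normr_nat. Qed.

Lemma rowsum_W p (k : 'I_p) : \sum_j `|W R p k j| <= 2%:R.
Proof.
apply: le_trans (ler_sum _ (fun j _ => normW_le k j)) _.
rewrite big_split /= !sum_ord_eq_nat -natrD ler_nat.
by rewrite !ltnS ltn_ord (ltnW (ltn_ord k)).
Qed.

Lemma colsum_W p (j : 'I_p.+1) : colsum (W R p) j <= (0 < j)%N%:R + (j < p)%N%:R.
Proof.
apply: le_trans (ler_sum _ (fun k _ => normW_le k j)) _.
rewrite big_split /= lerD //.
  case: (posnP j) => [-> | j_gt0]; first by rewrite big1.
  rewrite (eq_bigr (fun k : 'I_p => ((k : nat) == j.-1)%:R)) => [|k _].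
    by rewrite sum_ord_eq_nat ler_nat leq_b1.
  by congr (_%:R); apply/eqP/eqP; lia.
rewrite (eq_bigr (fun k : 'I_p => ((k : nat) == j)%:R)) ?sum_ord_eq_nat // => k _.
by rewrite eq_sym.
Qed.

Definition Lap p : 'M[R]_p.+1 := (W R p)^T *m W R p.

Lemma Lap_sym p : (Lap p)^T = Lap p.
Proof. by rewrite trmx_mul trmxK. Qed.

Lemma colsum_Lap p (j : 'I_p.+1) : (0 < p)%N -> colsum (Lap p) j <= 4%:R * tIw j.
Proof.
move=> p_gt0; apply: le_trans (colsum_trmx_mul _ _ (@rowsum_W p)) _.
apply: le_trans (ler_wpM2l _ (colsum_W j)) _; first by rewrite ler0n.
rewrite /tIw; have [-> | j_neq0] := eqVneq (j : nat) 0%N.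
  by rewrite p_gt0 /= add0r mulr1; lra.
have [j_eqp | j_neqp] := eqVneq (j : nat) p.
  by rewrite j_eqp ltnn orbT lt0n -j_eqp j_neq0 addr0 mulr1; lra.
have j_ltp : (j < p)%N by rewrite ltn_neqAle j_neqp -ltnS ltn_ord.
by rewrite lt0n j_neq0 j_ltp /=; lra.
Qed.

Lemma tI_sym p : (tI R p)^T = tI R p.
Proof. exact: tr_diag_mx. Qed.

Lemma Lap_0_1 p : (0 < p)%N -> Lap p ord0 (inord 1) = -1.
Proof.
move=> p_gt0; rewrite mxE (bigD1 (Ordinal p_gt0)) //= big1 => [|k k_neq0].
  by rewrite addr0 [_^T _ _]mxE !WE /= inordK //= subr0 sub0r mulN1r.
have k_gt0 : (0 < k)%N by rewrite lt0n.
by rewrite [_^T _ _]mxE WE /= eq_sym gtn_eqF // subrr mul0r.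
Qed.
End Stencil1D.

Section Discretization.
Variables (R : rcfType) (hbar m dx dy dz : R) (nx ny nz : nat).
Variable U : 'I_nx.+1 -> 'I_ny.+1 -> 'I_nz.+1 -> R.
Hypotheses (hbar_gt0 : 0 < hbar) (m_gt0 : 0 < m).
Hypotheses (dx_gt0 : 0 < dx) (dy_gt0 : 0 < dy) (dz_gt0 : 0 < dz).
Hypotheses (nx_gt0 : (0 < nx)%N) (ny_gt0 : (0 < ny)%N) (nz_gt0 : (0 < nz)%N).

Local Notation N := (nz.+1 * (ny.+1 * nx.+1))%N.
Local Notation DV := (DV dx dy dz nx ny nz).
Local Notation DVmhalf := (DVmhalf dx dy dz nx ny nz).
Local Notation H := (H hbar m dx dy dz U).

Definition iz (j : 'I_N) : 'I_nz.+1 := (mxtens_unindex j).1.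
Definition iy (j : 'I_N) : 'I_ny.+1 := (mxtens_unindex (mxtens_unindex j).2).1.
Definition ix (j : 'I_N) : 'I_nx.+1 := (mxtens_unindex (mxtens_unindex j).2).2.

Definition dv (j : 'I_N) : R :=
  dx * dy * dz * (tIw R (iz j) * (tIw R (iy j) * tIw R (ix j))).

Lemma dv_gt0 j : 0 < dv j.
Proof. by rewrite !mulr_gt0 ?tIw_gt0. Qed.

Lemma dv_ge0 j : 0 <= dv j.
Proof. exact/ltW/dv_gt0. Qed.

Lemma DVE : DV = diag_mx (\row_j dv j).
Proof. by apply/matrixP => i j; rewrite /Defs.DV !tIE !tens_diag_mx !mxE mulrnAr. Qed.

Lemma DVmhalfE : DVmhalf = diag_mx (\row_j (Num.sqrt (dv j))^-1).
Proof.
apply/matrixP => i j; rewrite /Defs.DVmhalf DVE !mxE.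
by case: eqP => [->|]; rewrite ?eqxx ?mulr1n ?mulr0n.
Qed.

Definition DVinv : 'M[R]_N := diag_mx (\row_j (dv j)^-1).

Lemma DVmhalf_sqr : DVmhalf *m DVmhalf = DVinv.
Proof.
rewrite DVmhalfE mulmx_diag; congr diag_mx; apply/rowP => j; rewrite !mxE.
by rewrite -invfM -expr2 sqr_sqrtr // ltW // dv_gt0.
Qed.

Lemma DVmhalf_unit : DVmhalf \in unitmx.
Proof.
rewrite DVmhalfE unitmxE det_diag unitfE; apply/prodf_neq0 => j _.
by rewrite mxE invr_eq0 sqrtr_eq0 -ltNge dv_gt0.
Qed.

Definition Kx := (dy * dz) *: (tI R nz.+1 *t (tI R ny.+1 *t Lap R nx)).
Definition Ky := (dx * dz) *: (tI R nz.+1 *t (Lap R ny *t tI R nx.+1)).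
Definition Kz := (dx * dy) *: (Lap R nz *t (tI R ny.+1 *t tI R nx.+1)).
Definition K := dx^-1 *: Kx + (dy^-1 *: Ky + dz^-1 *: Kz).

Lemma invmx_Dl : invmx (Dl dx dy dz nx ny nz) =
  block_mx (dx^-1 *: 1%:M) 0 0 (block_mx (dy^-1 *: 1%:M) 0 0 (dz^-1 *: 1%:M)).
Proof.
set Dlinv := block_mx _ _ _ _.
have DlV : Dl dx dy dz nx ny nz *m Dlinv = 1%:M.
  rewrite /Dl !mulmx_block !(mulmx0, mul0mx, addr0, add0r) -!scalemxAl !mul1mx.
  by rewrite !scalerA !divff ?gt_eqF // !scale1r -!scalar_mx_block.
have [Dl_unit _] := mulmx1_unit DlV.
by rewrite -[RHS]mul1mx -(mulVmx Dl_unit) -mulmxA DlV mulmx1.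
Qed.

Lemma stiffnessE :
  D R nx ny nz *m DS dx dy dz nx ny nz *m invmx (Dl dx dy dz nx ny nz) *m (D R nx ny nz)^T
  = K.
Proof.
rewrite invmx_Dl /D /DS.
do 4!rewrite mul_row_block !(mulmx0, addr0, add0r).
rewrite !tr_row_mx !mul_row_col /Dx /Dy /Dz !linearN /= !trmx_tens !trmx1 !trmxK.
rewrite !mulNmx !opprK -!scalemxAr -!scalemxAl !mulmx1 !tensmx_mul.
by rewrite !mul1mx !mulmx1.
Qed.

Lemma HE : H = (hbar ^+ 2 / (2%:R * m)) *: K + DV *m DU U.
Proof. by rewrite /Defs.H stiffnessE. Qed.

Lemma colsum_K j :
  colsum K j <= 4%:R * dv j * ((dx ^+ 2)^-1 + (dy ^+ 2)^-1 + (dz ^+ 2)^-1).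
Proof.
apply: le_trans (colsumD _ _ _) _; apply: le_trans (lerD (lexx _) (colsumD _ _ _)) _.
have [dx_ge0 dy_ge0 dz_ge0] := And3 (ltW dx_gt0) (ltW dy_gt0) (ltW dz_gt0).
rewrite !colsumZ !colsum_tens !colsum_tI !ger0_norm ?invr_ge0 ?mulr_ge0 //.
rewrite -/(iz j) -/(iy j) -/(ix j).
have := colsum_Lap R (ix j) nx_gt0; have := colsum_Lap R (iy j) ny_gt0.
have := colsum_Lap R (iz j) nz_gt0.
have := tIw_gt0 R (ix j); have := tIw_gt0 R (iy j); have := tIw_gt0 R (iz j).
rewrite /dv; set a := tIw R (iz j); set b := tIw R (iy j); set c := tIw R (ix j).
move=> a_gt0 b_gt0 c_gt0 Lz Ly Lx.
have -> : 4%:R * (dx * dy * dz * (a * (b * c)))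
             * ((dx ^+ 2)^-1 + (dy ^+ 2)^-1 + (dz ^+ 2)^-1)
  = dx^-1 * (dy * dz * (a * (b * (4%:R * c))))
    + (dy^-1 * (dx * dz * (a * ((4%:R * b) * c)))
       + dz^-1 * (dx * dy * ((4%:R * a) * (b * c)))).
  by field; rewrite !gt_eqF.
by apply: lerD; [|apply: lerD]; rewrite !ler_pM2l ?ler_pM2r ?invr_gt0 ?mulr_gt0.
Qed.

Lemma normU_le_maxU a b c : `|U a b c| <= maxU U.
Proof.
apply: le_trans (le_bigmax _ _ a); apply: le_trans (le_bigmax _ _ b).
exact: le_bigmax _ _ c.
Qed.

Lemma DVDUE : DV *m DU U = diag_mx (\row_j (dv j * DU U j j)).
Proof.
by rewrite DVE /DU mulmx_diag; congr diag_mx; apply/rowP => j; rewrite !mxE eqxx.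
Qed.

Lemma colsum_DVDU j : colsum (DV *m DU U) j <= dv j * maxU U.
Proof.
rewrite DVDUE colsum_diag mxE normrM ger0_norm ?dv_ge0 // ler_pM2l ?dv_gt0 //.
by rewrite /DU !mxE eqxx mulr1n normU_le_maxU.
Qed.

Definition cfl_rate : R :=
  (2%:R * hbar / m) * (dx ^+ 2)^-1 + (2%:R * hbar / m) * (dy ^+ 2)^-1
  + (2%:R * hbar / m) * (dz ^+ 2)^-1 + maxU U / hbar.

Lemma cfl_rate_gt0 : 0 < cfl_rate.
Proof.
have maxU_ge0 : 0 <= maxU U := le_trans (normr_ge0 _) (normU_le_maxU ord0 ord0 ord0).
by rewrite ltr_wpDr ?divr_ge0 ?(ltW hbar_gt0) // !addr_gt0 // !mulr_gt0 ?invr_gt0 ?exprn_gt0.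
Qed.

Lemma colsum_H j : colsum H j <= hbar * cfl_rate * dv j.
Proof.
set c := hbar ^+ 2 / (2%:R * m).
have c_ge0 : 0 <= c by rewrite divr_ge0 ?sqr_ge0 ?mulr_ge0 ?ler0n ?(ltW m_gt0).
rewrite HE; apply: le_trans (colsumD _ _ _) _; rewrite colsumZ ger0_norm //.
rewrite [X in _ <= X](_ : _ = c * (4%:R * dv j * ((dx ^+ 2)^-1 + (dy ^+ 2)^-1 + (dz ^+ 2)^-1))
                            + dv j * maxU U); last by rewrite /cfl_rate /c; field; rewrite !gt_eqF.
exact: lerD (ler_wpM2l c_ge0 (colsum_K j)) (colsum_DVDU j).
Qed.

Definition A_cfl := hbar^-1 *: (DVmhalf *m H *m DVmhalf).
Definition B_cfl := hbar^-1 *: (H *m DVinv).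

Lemma A_cfl_similar : A_cfl *m DVmhalf = DVmhalf *m B_cfl.
Proof. by rewrite -scalemxAl -scalemxAr -DVmhalf_sqr !mulmxA. Qed.

Lemma colsum_B_cfl j : colsum B_cfl j <= cfl_rate.
Proof.
rewrite colsumZ colsum_mul_diag mxE !ger0_norm ?invr_ge0 ?dv_ge0 ?(ltW hbar_gt0) //.
rewrite mulrA ler_pdivrMr ?dv_gt0 // ler_pdivrMl //.
by rewrite mulrA colsum_H.
Qed.

Lemma K_sym : K^T = K.
Proof. by rewrite !linearD !linearZ /= !trmx_tens !tI_sym !Lap_sym. Qed.

Lemma H_sym : H^T = H.
Proof. by rewrite HE linearD linearZ /= K_sym DVDUE tr_diag_mx. Qed.

Lemma A_cfl_sym : A_cfl^T = A_cfl.
Proof. by rewrite /A_cfl linearZ /= !trmx_mul DVmhalfE tr_diag_mx H_sym mulmxA. Qed.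

Definition node000 : 'I_N := mxtens_index (ord0, mxtens_index (ord0, ord0)).
Definition node001 : 'I_N := mxtens_index (ord0, mxtens_index (ord0, inord 1)).

(* Only the x-stencil couples these two neighbouring nodes. *)
Lemma H_node000_node001 : H node000 node001 != 0.
Proof.
have node_neq : node000 != node001.
  rewrite !(can_eq (@mxtens_indexK _ _)) !xpair_eqE !eqxx.
  by rewrite -val_eqE /= inordK.
rewrite HE DVDUE [fun_of_matrix (_ + _) _ _]mxE [fun_of_matrix (diag_mx _) _ _]mxE.
rewrite (negPf node_neq) addr0.
have c_neq0 : hbar ^+ 2 / (2%:R * m) != 0.
  by rewrite gt_eqF // divr_gt0 ?exprn_gt0 ?mulr_gt0.
rewrite [fun_of_matrix (_ *: _) _ _]mxE mulf_eq0 negb_or c_neq0 /=.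
rewrite /K /Kx /Ky /Kz ![fun_of_matrix (_ + _) _ _]mxE ![fun_of_matrix (_ *: _) _ _]mxE.
rewrite !tensmxE Lap_0_1 //.
have ord0_neq1 : (ord0 == inord 1 :> 'I_nx.+1) = false.
  by rewrite -val_eqE /= inordK.
rewrite !tI_entry !eqxx ord0_neq1 !mulr0n !mulr0 !addr0.
by rewrite !mulf_neq0 ?invr_eq0 ?oppr_eq0 ?oner_eq0 ?gt_eqF ?tIw_gt0.
Qed.

Lemma A_cfl_neq0 : A_cfl != 0.
Proof.
have HA : H = hbar *: (invmx DVmhalf *m A_cfl *m invmx DVmhalf).
  rewrite /A_cfl -scalemxAr -scalemxAl scalerA mulfV ?gt_eqF // scale1r !mulmxA.
  by rewrite mulVmx ?DVmhalf_unit // mul1mx -mulmxA mulmxV ?DVmhalf_unit // mulmx1.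
apply/eqP => A0; move: H_node000_node001.
by rewrite HA A0 mulmx0 mul0mx scaler0 mxE eqxx.
Qed.

End Discretization.

Theorem theorem2 (R : rcfType) (hbar m dx dy dz : R) (nx ny nz : nat)
  (U : 'I_nx.+1 -> 'I_ny.+1 -> 'I_nz.+1 -> R) :
  0 < hbar -> 0 < m -> 0 < dx -> 0 < dy -> 0 < dz ->
  (0 < nx)%N -> (0 < ny)%N -> (0 < nz)%N ->
  dt_CFL hbar m dx dy dz U <= dt_CFL_gen hbar m dx dy dz U.
Proof.
move=> hbar_gt0 m_gt0 dx_gt0 dy_gt0 dz_gt0 nx_gt0 ny_gt0 nz_gt0.
set A := A_cfl hbar m dx dy dz U; set rate := cfl_rate hbar m dx dy dz U.
have rate_gt0 : 0 < rate by apply: cfl_rate_gt0.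
have rho_gt0 : 0 < spectral_radius A.
  by apply: spectral_radius_gt0; [apply: A_cfl_sym | apply: A_cfl_neq0].
have rho_le : spectral_radius A <= rate.
  apply: (spectral_radius_le_colsum (B := B_cfl hbar m dx dy dz U)
                                    (S := DVmhalf dx dy dz nx ny nz)).
  - exact: DVmhalf_unit.
  - exact: A_cfl_similar.
  - exact: colsum_B_cfl.
  - exact: ltW.
change (2%:R / rate <= 2%:R / spectral_radius A).
by rewrite ler_pM2l ?ltr0n // lef_pV2.
Qed.
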